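(* Let $n\ge3$ and let $\Gamma$ be a $\mathbb{D}_n$-symmetric billiard curve. Let $H=\langle\rho,\sigma\rangle\subset\mathbb{D}_n$ be a dihedral subgroup of order $2N$ with $N\ge3$, generated by a rotation $\rho$ of order $N$ and a reflection $\sigma$. Let $z\in\Gamma^{\mathbb{Z}}$ be a billiard sequence of minimal period $p\ge3$ with spatiotemporal symmetry group $H(z)=H$. Then: - $p$ is an integer multiple of $N$; - there is a unique $1\le M\le N-1$ with $\gcd(M,N)=1$ such that $\rho^M(z_i)=z_{p/N+i}$ for all $i$; - there is a unique $0\le k<p$ such that $\sigma(z_i)=z_{k-i}$ for all $i$.
   Context: $\mathbb{D}_n=\langle R,S\rangle$, where $R$ is rotation by $2\pi/n$ and $S$ is the horizontal reflection. A $\mathbb{D}_n$-symmetric billiard curve is a $C^2$ simple closed $\mathbb{D}_n$-invariant curve bounding a strictly convex domain. A billiard sequence is $z\in\Gamma^{\mathbb{Z}}$ with $z_i\ne z_{i+1}$. The spatiotemporal symmetry group $H(z)$ is the set of $h\in\mathbb{D}_n$ for which there is $k\in\mathbb{Z}$ with $h(z_i)=z_{k+i}$ for all $i$ (time-preserving) or $h(z_i)=z_{k-i}$ for all $i$ (time-reversing). *)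

From HB Require Import structures.
From mathcomp Require Import all_boot all_order all_algebra.
From mathcomp Require Import all_classical all_reals all_analysis.
Set Implicit Arguments. Unset Strict Implicit. Unset Printing Implicit Defensive.
Import Order.TTheory GRing.Theory Num.Theory numFieldNormedType.Exports.
Local Open Scope classical_set_scope.
Local Open Scope ring_scope.

Section Defs.
Variable R : realType.
Notation P2 := (R * R)%type.

Definition rot (t : R) (v : P2) : P2 :=
  (cos t * v.1 - sin t * v.2, sin t * v.1 + cos t * v.2).

Definition Rn (n k : nat) : P2 -> P2 := rot (2 * pi * k%:R / n%:R).

Definition Sref (v : P2) : P2 := (v.1, - v.2).

Definition Dn (n : nat) : set (P2 -> P2) :=
  [set g | exists k : nat, exists b : bool,
           g = Rn n k \o (if b then Sref else id)].

Definition is_rotation (n : nat) (g : P2 -> P2) : Prop :=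
  exists k : nat, g = Rn n k.
Definition is_reflection (n : nat) (g : P2 -> P2) : Prop :=
  exists k : nat, g = Rn n k \o Sref.

Definition has_order (g : P2 -> P2) (N : nat) : Prop :=
  (0 < N)%N /\ iter N g = id /\ forall m : nat, (0 < m < N)%N -> iter m g <> id.

Definition gen_group (A : set (P2 -> P2)) : set (P2 -> P2) :=
  [set g | forall S : set (P2 -> P2),
      S id -> A `<=` S ->
      (forall f h, S f -> S h -> S (f \o h)) ->
      (forall f h, S f -> f \o h = id -> h \o f = id -> S h) ->
      S g].

Definition C2 (f : R -> R) : Prop :=
  (forall t, derivable f t 1) /\ (forall t, derivable (derive1 f) t 1) /\
  continuous (derive1 (derive1 f) : R -> R).

Definition segment_pt (a b : P2) (t : R) : P2 :=
  ((1 - t) * a.1 + t * b.1, (1 - t) * a.2 + t * b.2).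

Definition strictly_convex (K : set P2) : Prop :=
  forall a b, closure K a -> closure K b -> a <> b ->
  forall t, 0 < t < 1 -> (interior K) (segment_pt a b t).

Definition billiard_curve (Gamma : set P2) : Prop :=
  (exists (L : R) (x y : R -> R),
     0 < L /\ C2 x /\ C2 y /\
     (forall t, x (t + L) = x t /\ y (t + L) = y t) /\
     (forall t, (derive1 x t) ^+ 2 + (derive1 y t) ^+ 2 != 0) /\
     (forall s t, 0 <= s < L -> 0 <= t < L -> (x s, y s) = (x t, y t) -> s = t) /\
     Gamma = [set (x t, y t) | t in `[0, L[]) /\
  (exists K : set P2, strictly_convex K /\ Gamma = closure K `\` interior K).

Definition Dn_symmetric_billiard_curve (n : nat) (Gamma : set P2) : Prop :=
  billiard_curve Gamma /\ forall g, Dn n g -> g @` Gamma = Gamma.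

Definition billiard_sequence (Gamma : set P2) (z : int -> P2) : Prop :=
  (forall i, Gamma (z i)) /\ (forall i, z i <> z (i + 1)).

Definition minimal_period (z : int -> P2) (p : nat) : Prop :=
  (0 < p)%N /\ (forall i, z (i + p%:Z) = z i) /\
  (forall q : nat, (0 < q < p)%N -> exists i, z (i + q%:Z) <> z i).

Definition spatiotemporal (n : nat) (z : int -> P2) : set (P2 -> P2) :=
  [set h | Dn n h /\
     ((exists k : int, forall i, h (z i) = z (k + i)) \/
      (exists k : int, forall i, h (z i) = z (k - i)))].

End Defs.

From Pilot Require Import Defs.
From HB Require Import structures.
From mathcomp Require Import all_boot all_order all_algebra.
From mathcomp Require Import all_classical all_reals all_analysis.
From mathcomp Require Import ring lra zify.
Set Implicit Arguments.
Unset Strict Implicit.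
Unset Printing Implicit Defensive.
Import Order.TTheory GRing.Theory Num.Theory.

(* A plane rotation fixing two distinct points is the identity, and consecutive
   points of a billiard sequence are distinct (this is the only property of
   billiards used); so an element of H(z) that fixes every z_i is trivial.
   Hence rho cannot reverse time (rho^2 would fix z, so N | 2): it shifts z by
   some k, and rho^j fixes z iff p | j k.  Thus N is the order of k in Z/pZ,
   i.e. p = N gcd(k, p), and rho^M shifts z by p / N = gcd(k, p) exactly for
   the M inverting k / gcd(k, p) modulo N.  A time-preserving sigma would
   commute with rho on z, and sigma rho sigma = rho^-1 would make rho^2 fix
   every sigma(z_i); so sigma reverses time, and its reversal index is unique
   modulo p by minimality of the period. *)

Section ShiftOrder.
Variables N p k : nat.
Hypothesis p_gt0 : 0 < p.
Hypothesis N_gt1 : 1 < N.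
(* [N] is the order of [k] in [Z/pZ]. *)
Hypothesis dvdn_order_shift : forall j, (N %| j) = (p %| j * k).

Let g := gcdn k p.

Let g_gt0 : 0 < g. Proof. by rewrite /g gcdn_gt0 p_gt0 orbT. Qed.
Let kE : k = k %/ g * g. Proof. by rewrite divnK ?dvdn_gcdl. Qed.
Let pE : p = p %/ g * g. Proof. by rewrite divnK ?dvdn_gcdr. Qed.

Let coprime_div_gcd : coprime (k %/ g) (p %/ g).
Proof.
rewrite /coprime -(eqn_pmul2r g_gt0) mul1n muln_gcdl.
by rewrite -kE -pE.
Qed.

Lemma order_shift_divn : N = p %/ g.
Proof.
have dvdnE j : (N %| j) = (p %/ g %| j).
  rewrite dvdn_order_shift {1}pE {1}kE mulnA dvdn_pmul2r //.
  by rewrite Gauss_dvdl // coprime_sym.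
by apply/eqP; rewrite eqn_dvd -dvdnE dvdnn dvdnE dvdnn.
Qed.

Lemma mul_order_gcdn : N * g = p.
Proof. by rewrite order_shift_divn -pE. Qed.

Lemma shift_mod_inj a b : a < N -> b < N -> a * k = b * k %[mod p] -> a = b.
Proof.
wlog le_ab : a b / a <= b => [wlog_ab ltaN ltbN eq_ab|_ ltbN].
  by case: (leqP a b) => [|/ltnW] ? ; [|symmetry]; apply: wlog_ab.
move/eqP; rewrite eq_sym eqn_mod_dvd ?leq_mul2r ?le_ab ?orbT //.
rewrite -mulnBl -dvdn_order_shift => dvd_ba.
case: (posnP (b - a)) => [/eqP|ba_gt0].
  by rewrite subn_eq0 => le_ba; apply/anti_leq/andP.
by rewrite gtnNdvd // (leq_ltn_trans (leq_subr a b)) in dvd_ba.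
Qed.

Lemma shift_mod_inverse : exists M, [/\ 0 < M < N, coprime M N & M * k = g %[mod p]].
Proof.
have k'N : coprime (k %/ g) N by rewrite order_shift_divn.
have k'_gt0 : 0 < k %/ g.
  by case: posnP k'N => // ->; rewrite /coprime gcd0n => /eqP; lia.
case: (egcdnP N k'_gt0) => u v; rewrite (eqP k'N) => uk' _.
have invM : u %% N * (k %/ g) = 1 %[mod N] by rewrite modnMml uk' modnMDl.
exists (u %% N); split.
- have M_gt0 : 0 < u %% N by case: posnP invM => // ->; rewrite mul0n mod0n modn_small.
  by rewrite M_gt0 ltn_pmod ?(ltnW N_gt1).
- have : coprime (u %% N * (k %/ g)) N.
    by rewrite -coprime_modl invM coprime_modl coprime1n.
  by rewrite coprimeMl => /andP[].
- by rewrite {1}kE mulnA -[in RHS](mul1n g) -mul_order_gcdn -!muln_modl invM.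
Qed.

End ShiftOrder.

Local Open Scope classical_set_scope.
Local Open Scope ring_scope.
(* Disambiguates from [seq.rot]. *)
Local Notation rot := Pilot.Defs.rot.

Section PlaneRotations.
Variable R : realType.
Implicit Types (s t : R) (v w : R * R).

Lemma rotD s t v : rot s (rot t v) = rot (s + t) v.
Proof. by case: v => x y; rewrite /rot /= cosD sinD; congr (_, _); ring. Qed.

Lemma rot0 v : rot 0 v = v.
Proof. by case: v => x y; rewrite /rot /= cos0 sin0; congr (_, _); ring. Qed.

Lemma Sref_rot t v : Sref (rot t v) = rot (- t) (Sref v).
Proof. by case: v => x y; rewrite /rot /Sref /= cosN sinN; congr (_, _); ring. Qed.

Lemma SrefK : involutive (@Sref R).
Proof. by case=> x y; rewrite /Sref /= opprK. Qed.

Lemma iter_rot t (m : nat) v : iter m (rot t) v = rot (m%:R * t) v.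
Proof.
elim: m => [|m IHm]; first by rewrite mul0r rot0.
by rewrite iterS IHm rotD mulrSr mulrDl mul1r addrC.
Qed.

(* [(2 - 2 cos t) v] is a linear combination of the coordinates of [rot t v - v]. *)
Lemma rot_fix_cos t v :
  rot t v = v -> (2 - 2 * cos t) * v.1 = 0 /\ (2 - 2 * cos t) * v.2 = 0.
Proof.
case: v => x y; rewrite /rot /= => -[fx fy]; have cs := cos2Dsin2 t.
set c := cos t in fx fy cs *; set s := sin t in fx fy cs *.
have two_c : 2 - 2 * c = (c - 1) ^+ 2 + s ^+ 2.
  have -> : (c - 1) ^+ 2 + s ^+ 2 = c ^+ 2 + s ^+ 2 + 1 - 2 * c by ring.
  by rewrite cs; ring.
rewrite two_c; split.
- have -> : ((c - 1) ^+ 2 + s ^+ 2) * x =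
      (c - 1) * (c * x - s * y - x) + s * (s * x + c * y - y) by ring.
  by rewrite fx fy !subrr !mulr0 addr0.
- have -> : ((c - 1) ^+ 2 + s ^+ 2) * y =
      - s * (c * x - s * y - x) + (c - 1) * (s * x + c * y - y) by ring.
  by rewrite fx fy !subrr !mulr0 addr0.
Qed.

Lemma rot_eq_id t v w : v <> w -> rot t v = v -> rot t w = w -> rot t = id.
Proof.
move=> neq_vw /rot_fix_cos[vx vy] /rot_fix_cos[wx wy].
have cos1 : cos t = 1.
  apply: contra_notP neq_vw => /eqP cos_neq1.
  have nz : 2 - 2 * cos t != 0 by apply: contra cos_neq1 => /eqP ?; apply/eqP; lra.
  have coord0 a : (2 - 2 * cos t) * a = 0 -> a = 0.
    by move/eqP; rewrite mulf_eq0 (negbTE nz) => /eqP.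
  by move: v w vx vy wx wy => [? ?] [? ?] /= /coord0-> /coord0-> /coord0-> /coord0->.
have sin0 : sin t = 0.
  by apply/eqP; rewrite -sqrf_eq0; have := cos2Dsin2 t; rewrite cos1; lra.
by apply/funext => -[x y]; rewrite /rot cos1 sin0 /=; congr (_, _); ring.
Qed.

Lemma rotK t : cancel (rot t) (rot (- t)).
Proof. by move=> v; rewrite rotD addNr rot0. Qed.

Lemma rot_Sref_inj s : injective (rot s \o @Sref R).
Proof. by move=> v w /= /(can_inj (rotK s)) /(can_inj SrefK). Qed.

Lemma rot_Sref_conj s t v : rot t (rot s (Sref (rot t v))) = rot s (Sref v).
Proof. by rewrite Sref_rot !rotD (addrC t) addrK. Qed.

Lemma iter_order_id (f : R * R -> R * R) N j :
  has_order f N -> iter j f = id <-> (N %| j)%N.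
Proof.
case=> N_gt0 [fN min_N].
have iter_mulN q : iter (q * N) f = id.
  by elim: q => // q IHq; apply/funext => v; rewrite mulSn iterD fN IHq.
split => [fj|/dvdnP[q ->] //].
have f_mod : iter (j %% N) f = id.
  apply/funext => v; have := congr1 (@^~ v) fj.
  by rewrite {1}(divn_eq j N) iterD iter_mulN.
case: (posnP (j %% N)) => [|mod_gt0]; first by move/eqP.
by have [] := min_N _ (andb_true_intro (conj mod_gt0 (ltn_pmod j N_gt0))).
Qed.

Lemma rot_order_dvdn t N j v w : has_order (rot t) N -> v <> w ->
  iter j (rot t) v = v -> iter j (rot t) w = w -> (N %| j)%N.
Proof.
move=> ordN neq_vw; rewrite !iter_rot => fix_v fix_w.
apply/(iter_order_id j ordN)/funext => u.
by rewrite iter_rot (rot_eq_id neq_vw fix_v fix_w).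
Qed.

End PlaneRotations.

Section PeriodicSequences.
Variables (T : Type) (z : int -> T) (p : nat).
Hypothesis p_gt0 : (0 < p)%N.
Hypothesis z_periodic : forall i, z (i + p%:Z) = z i.

Lemma periodic_mulz (q : int) i : z (i + q * p%:Z) = z i.
Proof.
have periodic_muln (m : nat) j : z (j + m%:Z * p%:Z) = z j.
  elim: m j => [|m IHm] j; first by rewrite mul0r addr0.
  by rewrite intS mulrDl mul1r addrA IHm z_periodic.
case: q => m; first exact: periodic_muln.
by rewrite -(periodic_muln m.+1) NegzE mulNr addrNK.
Qed.

Lemma periodic_modz a i : z (a + i) = z ((a %% p%:Z)%Z + i).
Proof. by rewrite {1}(divz_eq a p%:Z) -addrA addrC periodic_mulz. Qed.

Lemma periodic_eqmodn (a b : nat) :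
  a = b %[mod p] -> forall i, z (a%:Z + i) = z (b%:Z + i).
Proof. by move=> eq_ab i; rewrite periodic_modz [RHS]periodic_modz !modz_nat eq_ab. Qed.

Lemma periodic_reduce a : exists2 k : nat, (k < p)%N & forall i, z (a + i) = z (k%:Z + i).
Proof.
have p_neq0 : p%:Z != 0 by rewrite eqz_nat -lt0n.
exists `|(a %% p%:Z)%Z|%N; last by move=> i; rewrite gez0_abs ?modz_ge0 // periodic_modz.
by rewrite -ltz_nat gez0_abs ?modz_ge0 // ltz_pmod ?ltz_nat.
Qed.

Hypothesis p_minimal : forall q : nat, (0 < q < p)%N -> exists i, z (i + q%:Z) <> z i.

Lemma minimal_period_dvdn (q : nat) : (forall i, z (i + q%:Z) = z i) -> (p %| q)%N.
Proof.
move=> z_q; case: (posnP (q %% p)) => [/eqP //|mod_gt0].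
have [i] := p_minimal (andb_true_intro (conj mod_gt0 (ltn_pmod q p_gt0))).
by rewrite addrC -modz_nat -periodic_modz addrC z_q.
Qed.

Lemma eq_shift_modn (a b : nat) :
  (forall i, z (a%:Z + i) = z (b%:Z + i)) <-> a = b %[mod p].
Proof.
split; last exact: periodic_eqmodn.
wlog le_ab : a b / (a <= b)%N => [wlog_ab z_ab|z_ab].
  by case: (leqP a b) => [|/ltnW] le; [|symmetry]; apply: wlog_ab => // i; rewrite z_ab.
apply/eqP; rewrite eq_sym eqn_mod_dvd //; apply: minimal_period_dvdn => i.
by rewrite -[in RHS](subrK a%:Z i) [in RHS]addrC z_ab -subzn //; congr z; ring.
Qed.

Lemma reversal_shift_unique (f : T -> T) (m : int) :
  (forall i, f (z i) = z (m - i)) ->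
  exists! k : nat, (k < p)%N /\ forall i, f (z i) = z (k%:Z - i).
Proof.
move=> f_z; have [k k_lt mE] := periodic_reduce m.
exists k; split=> [|k' [k'_lt f_z']]; first by split=> // i; rewrite f_z mE.
have /eq_shift_modn : forall i, z (k%:Z + i) = z (k'%:Z + i).
  by move=> i; have := f_z' (- i); rewrite f_z mE !opprK.
by rewrite !modn_small.
Qed.

End PeriodicSequences.

Section SpatiotemporalShifts.
Variables (T : Type) (z : int -> T) (f : T -> T).

Lemma iter_shift (s : int) : (forall i, f (z i) = z (s + i)) ->
  forall (j : nat) i, iter j f (z i) = z (j%:Z * s + i).
Proof.
move=> f_shift; elim=> [|j IHj] i; first by rewrite mul0r add0r.
by rewrite iterS IHj f_shift intS mulrDl mul1r addrA.
Qed.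

Lemma iter2_reversal (s : int) : (forall i, f (z i) = z (s - i)) ->
  forall i, iter 2 f (z i) = z i.
Proof. by move=> f_rev i; rewrite /= !f_rev opprB addrC subrK. Qed.

End SpatiotemporalShifts.

Lemma rot_shift_order (R : realType) (t : R) N (z : int -> R * R) p (k : nat) :
  has_order (rot t) N -> z 0 <> z 1 -> minimal_period z p ->
  (forall i, rot t (z i) = z (k%:Z + i)) -> forall j, (N %| j)%N = (p %| j * k)%N.
Proof.
move=> ordN z01 [p_gt0 [z_per z_min]] rot_z j.
have iter_z i : iter j (rot t) (z i) = z ((j * k)%N%:Z + i).
  by rewrite PoszM (iter_shift rot_z).
have fixE : (forall i, iter j (rot t) (z i) = z i) <-> (p %| j * k)%N.
  split => [fix_z|dvd_p i].
  - apply/eqP; rewrite -(mod0n p); apply/(eq_shift_modn p_gt0 z_per z_min) => i.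
    by rewrite add0r -iter_z fix_z.
  - by rewrite iter_z (@periodic_eqmodn _ _ _ z_per _ 0) ?add0r // mod0n; apply/eqP.
apply/idP/idP => [/(iter_order_id j ordN) iter_id|/fixE fix_z].
- by apply/fixE => i; rewrite iter_id.
- exact: rot_order_dvdn ordN z01 (fix_z 0) (fix_z 1).
Qed.

Lemma gen_group_sub (R : realType) (A : set (R * R -> R * R)) : A `<=` gen_group A.
Proof. by move=> g Ag S _ AS _ _; apply: AS. Qed.

Lemma reflection_reversal (R : realType) (s t : R) N (z : int -> R * R) (k m : int) :
  has_order (rot t) N -> z 0 <> z 1 ->
  (forall i, rot t (z i) = z (k + i)) -> (forall i, rot s (Sref (z i)) = z (m + i)) ->
  (N %| 2)%N.
Proof.
move=> ordN z01 rot_z sigma_z.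
have fix_z i : iter 2 (rot t) (rot s (Sref (z i))) = rot s (Sref (z i)).
  rewrite /= -[in RHS](rot_Sref_conj s t); congr rot.
  by rewrite sigma_z !rot_z sigma_z addrCA.
by apply: rot_order_dvdn ordN _ (fix_z 0) (fix_z 1) => /rot_Sref_inj.
Qed.

Lemma rot_shift_generator (R : realType) (t : R) N (z : int -> R * R) p (k : nat) :
  has_order (rot t) N -> (1 < N)%N -> z 0 <> z 1 -> minimal_period z p ->
  (forall i, rot t (z i) = z (k%:Z + i)) ->
  (N %| p)%N /\ exists! M : nat, [/\ (1 <= M <= N - 1)%N, coprime M N &
    forall i, iter M (rot t) (z i) = z ((p %/ N)%N%:Z + i)].
Proof.
move=> ordN N_gt1 z01 min_p rot_z; have [p_gt0 [z_per z_min]] := min_p.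
have ordNk := rot_shift_order ordN z01 min_p rot_z.
have pE := mul_order_gcdn p_gt0 ordNk.
have iterE M : (forall i, iter M (rot t) (z i) = z ((p %/ N)%N%:Z + i)) <->
    M * k = gcdn k p %[mod p].
  rewrite -{1}pE mulKn ?(ltnW N_gt1) // -(eq_shift_modn p_gt0 z_per z_min).
  by split=> shift_z i; rewrite -shift_z PoszM (iter_shift rot_z).
split; first by rewrite -pE dvdn_mulr.
have [M [/andP[M_gt0 M_lt] coMN Mk]] := shift_mod_inverse p_gt0 N_gt1 ordNk.
exists M; split=> [|M' [/andP[_ M'_le] _ /iterE M'k]].
  by split=> //; [lia | exact/iterE].
by apply: (shift_mod_inj ordNk) => //; [lia | rewrite Mk M'k].
Qed.

Theorem mainTheorem9 (R : realType) (n : nat) (Gamma : set (R * R))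
  (rho sigma : R * R -> R * R) (N : nat) (z : int -> R * R) (p : nat) :
  (3 <= n)%N ->
  Dn_symmetric_billiard_curve n Gamma ->
  Dn n rho -> is_rotation n rho -> has_order rho N -> (3 <= N)%N ->
  Dn n sigma -> is_reflection n sigma ->
  billiard_sequence Gamma z ->
  minimal_period z p -> (3 <= p)%N ->
  spatiotemporal n z = gen_group [set rho; sigma] ->
  [/\ (N %| p)%N,
      (exists! M : nat, [/\ (1 <= M <= N - 1)%N, coprime M N &
         forall i : int, iter M rho (z i) = z ((p %/ N)%N%:Z + i)]) &
      (exists! k : nat, (k < p)%N /\
         forall i : int, sigma (z i) = z (k%:Z - i))].
Proof.
move=> _ _ _ [kr ->] ordN N_ge3 _ [ks ->] [_ z_step] min_p _ H_gen.
have [t rhoE] : exists t : R, Rn n kr = rot t by eexists.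
have [s sigmaE] : exists s : R, Rn n ks = rot s by eexists.
rewrite rhoE sigmaE in ordN H_gen *.
have [p_gt0 [z_per z_min]] := min_p.
have z01 : z 0 <> z 1 by rewrite -[1]add0r; apply: z_step.
have N_ndvd2 : ~ (N %| 2)%N by move/dvdn_leq => /(_ isT); lia.
have [_ [[k0 rot_z0]|[k0 rot_z]]] : spatiotemporal n z (rot t).
- by rewrite H_gen; apply: gen_group_sub; left.
- have [k _ k0E] := periodic_reduce p_gt0 z_per k0.
  have rot_z i : rot t (z i) = z (k%:Z + i) by rewrite rot_z0 k0E.
  have [N_dvd_p M_unique] := rot_shift_generator ordN (ltnW N_ge3) z01 min_p rot_z.
  have [_ [[m sigma_z]|[m sigma_z]]] : spatiotemporal n z (rot s \o @Sref R).
  + by rewrite H_gen; apply: gen_group_sub; right.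
  + by case: N_ndvd2; apply: reflection_reversal ordN z01 rot_z sigma_z.
  + by split=> //; apply: reversal_shift_unique p_gt0 z_per z_min _ _ sigma_z.
- have fix_z := iter2_reversal rot_z.
  by case: N_ndvd2; apply: rot_order_dvdn ordN z01 (fix_z 0) (fix_z 1).
Qed.
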